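(* Let $\Sigma$ be a finite polyhedral fan, $\mathcal A=\mathcal A_\Sigma$, and let $\mathcal I$ be a flabby $\mathcal A$-module. If $\eta:\mathcal M\to\mathcal N$ is a strongly injective map of $\mathcal A$-modules and $\mathcal N$ is locally free, then the induced map $\operatorname{Hom}_{\mathcal A}(\mathcal N,\mathcal I)\to\operatorname{Hom}_{\mathcal A}(\mathcal M,\mathcal I)$ is surjective.
   Context: $\mathcal A_\tau$ ($\tau\in\Sigma$) is the graded ring of complex polynomial functions on $\operatorname{Span}\tau$ with linear functions in degree $2$, and restriction maps to faces. An $\mathcal A$-module consists of finitely generated graded $\mathcal A_\tau$-modules $\mathcal M(\tau)$ with degree-$0$ $\mathcal A_\tau$-linear restriction maps $\mathcal M(\tau)\to\mathcal M(\xi)$ for $\xi$ a face of $\tau$, compatible with composition; $\operatorname{Hom}_{\mathcal A}$ denotes degree-$0$ morphisms. $\mathcal M(\partial\sigma)$ is the space of compatible families $(m_\xi)$ over the proper faces $\xi$ of $\sigma$. $\mathcal M$ is locally free if each $\mathcal M(\sigma)$ is free over $\mathcal A_\sigma$, and flabby if each $\mathcal M(\sigma)\to\mathcal M(\partial\sigma)$ is surjective. An injective map $\mathcal M\to\mathcal N$ is strongly injective if for every $\sigma$ the inclusion $\mathcal M(\sigma)\to\mathcal N(\sigma)$ splits (as graded $\mathcal A_\sigma$-modules). *)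

From HB Require Import structures.
From mathcomp Require Import all_boot all_order all_algebra.
From mathcomp Require Import boolp classical_sets cardinality reals.
From mathcomp Require Import complex.
From mathcomp Require Import mpoly.

Set Implicit Arguments.
Unset Strict Implicit.
Unset Printing Implicit Defensive.

Import Order.TTheory GRing.Theory Num.Theory.
Local Open Scope ring_scope.
Local Open Scope classical_set_scope.

Definition pairing (R : realType) (n : nat) (u x : 'rV[R]_n) : R :=
  \sum_(i < n) u ord0 i * x ord0 i.

Definition conic_hull (R : realType) (n : nat) (g : seq 'rV[R]_n) : set 'rV[R]_n :=
  [set x | exists lam : 'I_(size g) -> R,
     (forall k, 0 <= lam k) /\ x = \sum_(k < size g) lam k *: g`_k].

Definition is_polyhedral_cone (R : realType) (n : nat) (s : set 'rV[R]_n) :=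
  exists g : seq 'rV[R]_n, s = conic_hull g.

(* tau is a face of sigma: the intersection of sigma with a supporting
   hyperplane {u = 0}, u >= 0 on sigma (u = 0 gives sigma itself). *)
Definition is_face (R : realType) (n : nat) (tau sigma : set 'rV[R]_n) :=
  exists u : 'rV[R]_n, (forall x, sigma x -> 0 <= pairing u x) /\
    tau = sigma `&` [set x | pairing u x = 0].

Definition is_finite_fan (R : realType) (n : nat) (S : set (set 'rV[R]_n)) :=
  [/\ finite_set S,
      (forall s, S s -> is_polyhedral_cone s),
      (forall s t, S s -> is_face t s -> S t) &
      (forall s s', S s -> S s' -> is_face (s `&` s') s /\ is_face (s `&` s') s')].

Definition span_of (R : realType) (n : nat) (t : set 'rV[R]_n) : set 'rV[R]_n :=
  [set x | exists (m : nat) (c : 'I_m -> R) (v : 'I_m -> 'rV[R]_n),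
     (forall j, t (v j)) /\ x = \sum_(j < m) c j *: v j].

(* P = C[x_1..x_n] (C = R[i]) with linear forms in degree 2;
   A_tau = P / I_tau, where I_tau is the ideal of polynomials vanishing on
   Span tau, i.e. the ring of complex polynomial functions on Span tau.
   A graded A_tau-module is encoded as a graded P-module killed by I_tau;
   A_tau-linear maps are then exactly the P-linear maps.                  *)

Notation Pol R n := (mpoly.mpoly n (complex R)).

Definition polX (R : realType) (n : nat) (i : 'I_n) : Pol R n :=
  mpoly.mpolyX (complex R) (mpoly.mnm1 i).

Definition polC (R : realType) (n : nat) (c : complex R) : Pol R n :=
  mpoly.mpolyC n c.

Definition vanishes_on (R : realType) (n : nat) (t : set 'rV[R]_n) (p : Pol R n) :=
  forall x, span_of t x -> mpoly.meval (fun i => Complex (x ord0 i) 0) p = 0.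

Record gmod (R : realType) (n : nat) := GMod {
  gcar :> lmodType (Pol R n);
  gcomp : int -> gcar -> gcar;
  gcomp_add : forall k (u v : gcar), gcomp k (u + v) = gcomp k u + gcomp k v;
  gcomp_proj : forall k j (v : gcar),
      gcomp j (gcomp k v) = if j == k then gcomp k v else 0;
  gcomp_fin : forall v : gcar,
      exists s : seq int, uniq s /\ v = \sum_(k <- s) gcomp k v;
  gcomp_const : forall k (c : complex R) (v : gcar),
      gcomp k (polC n c *: v) = polC n c *: gcomp k v;
  gcomp_var : forall k (i : 'I_n) (v : gcar),
      gcomp k (polX R i *: v) = polX R i *: gcomp (k - 2) v
}.
Arguments gcomp {R n g} k _.

Definition is_gmorph (R : realType) (n : nat) (M N : gmod R n) (f : M -> N) :=
  (forall (p : Pol R n) (u v : M), f (p *: u + v) = p *: f u + f v) /\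
  (forall k (v : M), f (gcomp k v) = gcomp k (f v)).

Definition homogeneous (R : realType) (n : nat) (M : gmod R n) (v : M) :=
  exists d : int, gcomp d v = v.

Record amod (R : realType) (n : nat) := AMod {
  amM : set 'rV[R]_n -> gmod R n;
  amres : forall t xi : set 'rV[R]_n, amM t -> amM xi
}.
Arguments amM {R n} a t.
Arguments amres {R n} a t xi _.

Definition is_amod (R : realType) (n : nat) (S : set (set 'rV[R]_n))
    (M : amod R n) :=
  forall t, S t ->
    [/\ (* M(t) is an A_t-module *)
        (forall (p : Pol R n) (v : amM M t), vanishes_on t p -> p *: v = 0),
        (exists g : seq (amM M t), forall v : amM M t,
            exists c : 'I_(size g) -> Pol R n,
              v = \sum_(k < size g) c k *: g`_k),
        (forall xi, S xi -> is_face xi t -> is_gmorph (amres M t xi)),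
        (forall v, amres M t t v = v) &
        (forall xi zeta, S xi -> S zeta -> is_face xi t -> is_face zeta xi ->
           forall v, amres M xi zeta (amres M t xi v) = amres M t zeta v)].

Definition is_amap (R : realType) (n : nat) (S : set (set 'rV[R]_n))
    (M N : amod R n) (f : forall t, amM M t -> amM N t) :=
  (forall t, S t -> is_gmorph (f t)) /\
  (forall t xi, S t -> S xi -> is_face xi t ->
     forall v, f xi (amres M t xi v) = amres N t xi (f t v)).

Definition locally_free (R : realType) (n : nat) (S : set (set 'rV[R]_n))
    (M : amod R n) :=
  forall s, S s -> exists b : seq (amM M s),
    [/\ forall k : 'I_(size b), homogeneous b`_k,
        forall v : amM M s, exists c : 'I_(size b) -> Pol R n,
          v = \sum_(k < size b) c k *: b`_k &
        forall c : 'I_(size b) -> Pol R n,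
          \sum_(k < size b) c k *: b`_k = 0 -> forall k, vanishes_on s (c k)].

(* flabby: M(s) -> M(boundary s) surjective, M(boundary s) being the
   compatible families over the proper faces of s *)
Definition flabby (R : realType) (n : nat) (S : set (set 'rV[R]_n))
    (M : amod R n) :=
  forall s, S s -> forall m : forall xi, amM M xi,
    (forall xi zeta, S xi -> S zeta -> is_face xi s -> xi <> s ->
        is_face zeta xi -> amres M xi zeta (m xi) = m zeta) ->
    exists v : amM M s, forall xi, S xi -> is_face xi s -> xi <> s ->
        amres M s xi v = m xi.

Definition strongly_injective (R : realType) (n : nat) (S : set (set 'rV[R]_n))
    (M N : amod R n) (eta : forall t, amM M t -> amM N t) :=
  is_amap S eta /\
  forall s, S s -> injective (eta s) /\
    exists r : amM N s -> amM M s, is_gmorph r /\ cancel (eta s) r.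

From HB Require Import structures.
From mathcomp Require Import all_boot all_order all_algebra.
From mathcomp Require Import boolp classical_sets cardinality reals.
From mathcomp Require Import complex.
From mathcomp Require Import mpoly.

Set Implicit Arguments.
Unset Strict Implicit.
Unset Printing Implicit Defensive.

Import GRing.Theory.
Local Open Scope ring_scope.
Local Open Scope classical_set_scope.

(* The map f is built cone by cone, a cone s being treated after all its
   proper faces.  With r a graded retraction of eta_s, the differences
   D_xi = f_xi o res - res o g_s o r, xi a proper face of s, form a
   compatible family of morphisms N(s) -> I(xi) vanishing on eta_s(M(s)).
   Flabbiness lifts the values of D on a basis of the free module N(s) to
   I(s); the resulting A_s-linear map need not preserve degrees, but its
   degree-0 part H still restricts to D.  Then
   f_s = g_s o r + H o (1 - eta_s o r) extends both f and g. *)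

Lemma count_lt_subpred (T : eqType) (a b : pred T) (s : seq T) x :
  subpred b a -> x \in s -> a x -> ~~ b x -> (count b s < count a s)%N.
Proof.
move=> ba + ax nbx; elim: s => // y s IH; rewrite inE => /orP[/eqP <-|xs] /=.
  by rewrite ax (negbTE nbx) add0n add1n ltnS sub_count.
have := IH xs; case by_: (b y); first by rewrite (ba _ by_) ltn_add2l.
by move/leq_trans; apply; rewrite leq_addl.
Qed.

Lemma ex_maximal_set (U : Type) (T : set (set U)) (l : seq (set U)) :
  (forall t, T t -> t \in l) -> T !=set0 ->
  exists2 s, T s & forall t, T t -> ~ s `<` t.
Proof.
move=> Tl [x Tx].
pose above y := count (fun u => `[< T u /\ y `<` u >]) l.
have : exists m, `[< exists2 y, T y & above y = m >].
  by exists (above x); apply/asboolP; exists x.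
case/ex_minnP => _ /asboolP [s Ts <-] above_min.
exists s => // t Tt st.
have : (above t < above s)%N.
  apply: (count_lt_subpred (x := t)); first 1 last.
  - exact: Tl.
  - by apply/asboolP.
  - by apply/negP => /asboolP [_ /properxx].
  move=> u /asboolP [Tu tu]; apply/asboolP; split=> //.
  by apply/properPset; apply: (Order.POrderTheory.lt_trans (y := t)); apply/properPset.
by rewrite ltnNge above_min //; apply/asboolP; exists t.
Qed.

Lemma eq_big_support (V : nmodType) (I : eqType) (s1 s2 : seq I) (F : I -> V) :
  uniq s1 -> uniq s2 -> (forall i, i \notin s1 -> F i = 0) ->
  (forall i, i \notin s2 -> F i = 0) ->
  \sum_(i <- s1) F i = \sum_(i <- s2) F i.
Proof.
move=> u1 u2 F1 F2.
have restrict (s s' : seq I) : (forall i, i \notin s' -> F i = 0) ->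
    \sum_(i <- s) F i = \sum_(i <- s | i \in s') F i.
  move=> Fs'; rewrite [RHS]big_mkcond; apply: eq_bigr => i _.
  by case: ifP => // /negbT /Fs'.
rewrite (restrict s1 s2) // (restrict s2 s1) // -big_filter -[RHS]big_filter.
apply: perm_big; apply: uniq_perm; rewrite ?filter_uniq // => i.
by rewrite !mem_filter andbC.
Qed.

Lemma sum_pred1_uniq (V : nmodType) (I : eqType) (s : seq I) (F : I -> V) j :
  uniq s -> \sum_(i <- s) (if j == i then F i else 0) = if j \in s then F j else 0.
Proof.
elim: s => [|i s IH]; first by rewrite big_nil.
rewrite big_cons /= => /andP[i_notin_s us]; rewrite IH // inE.
by case: eqP => [->|_]; rewrite ?(negbTE i_notin_s) ?addr0 ?add0r.
Qed.

Definition plinear (K : pzRingType) (M N : lmodType K) (f : M -> N) :=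
  forall p u v, f (p *: u + v) = p *: f u + f v.

Section LinearMaps.
Variables (K : pzRingType) (M N P : lmodType K).

Section OneMap.
Variable f : M -> N.
Hypothesis f_lin : plinear f.

Lemma plinear0 : f 0 = 0.
Proof.
have := f_lin 1 0 0; rewrite !scale1r !addr0 => /(congr1 (fun x => x - f 0)).
by rewrite subrr addrK => <-.
Qed.

Lemma plinearD u v : f (u + v) = f u + f v.
Proof. by rewrite -[u in LHS]scale1r f_lin scale1r. Qed.

Lemma plinearZ p u : f (p *: u) = p *: f u.
Proof. by rewrite -[_ *: u]addr0 f_lin plinear0 addr0. Qed.

Lemma plinearB u v : f (u - v) = f u - f v.
Proof. by rewrite -scaleN1r plinearD plinearZ scaleN1r. Qed.

Lemma plinear_sum (I : Type) (s : seq I) (F : I -> M) :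
  f (\sum_(i <- s) F i) = \sum_(i <- s) f (F i).
Proof.
elim: s => [|i s IH]; first by rewrite !big_nil plinear0.
by rewrite !big_cons plinearD IH.
Qed.

Lemma plinear_comp (h : N -> P) : plinear h -> plinear (fun v => h (f v)).
Proof. by move=> h_lin p u v /=; rewrite f_lin h_lin. Qed.

End OneMap.

Lemma plinear_span_eq (b : seq M) (f f' : M -> N) :
  (forall v, exists c : 'I_(size b) -> K, v = \sum_(k < size b) c k *: b`_k) ->
  plinear f -> plinear f' -> (forall k : 'I_(size b), f b`_k = f' b`_k) -> f =1 f'.
Proof.
move=> b_span f_lin f'_lin fb v; have [c ->] := b_span v.
rewrite (plinear_sum f_lin) (plinear_sum f'_lin); apply: eq_bigr => k _.
by rewrite (plinearZ f_lin) (plinearZ f'_lin) fb.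
Qed.

End LinearMaps.

Lemma sum_scale_delta (K : pzRingType) (V : lmodType K) m (F : 'I_m -> V) k :
  \sum_(j < m) (j == k)%:R *: F j = F k.
Proof.
by rewrite (bigD1 k) //= eqxx scale1r big1 ?addr0 // => j /negbTE ->; rewrite scale0r.
Qed.

Lemma free_lift (K : pzRingType) (M N : lmodType K) (Z : K -> Prop)
    (b : seq M) (w : 'I_(size b) -> N) :
  (forall v, exists c : 'I_(size b) -> K, v = \sum_(k < size b) c k *: b`_k) ->
  (forall c, \sum_(k < size b) c k *: b`_k = 0 -> forall k, Z (c k)) ->
  (forall p (u : N), Z p -> p *: u = 0) ->
  exists2 h : M -> N, plinear h & forall k : 'I_(size b), h b`_k = w k.
Proof.
move=> b_span b_free Z_kills; have [cf cfE] := choice b_span.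
pose h v := \sum_(k < size b) cf v k *: w k.
have hE c v : v = \sum_(k < size b) c k *: b`_k -> h v = \sum_k c k *: w k.
  move=> vE; apply/eqP; rewrite -subr_eq0 -sumrB; apply/eqP.
  apply: big1 => k _; rewrite -scalerBl; apply: Z_kills.
  apply: (b_free (fun k => cf v k - c k)).
  by rewrite (eq_bigr _ (fun k _ => scalerBl _ _ _)) sumrB -cfE -vE subrr.
exists h.
  move=> p u v; rewrite (hE (fun k => p * cf u k + cf v k)).
    by rewrite scaler_sumr -big_split; apply: eq_bigr => k _; rewrite scalerDl scalerA.
  rewrite [u in LHS]cfE [v in LHS]cfE scaler_sumr -big_split.
  by apply: eq_bigr => k _ /=; rewrite scalerDl scalerA.
by move=> k; rewrite (hE (fun j => (j == k)%:R)) sum_scale_delta // sum_scale_delta.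
Qed.

Lemma mpoly_ring_ind (R : realType) (n : nat) (P : Pol R n -> Prop) :
  (forall c, P (polC n c)) -> (forall i, P (polX R i)) ->
  (forall p q, P p -> P q -> P (p + q)) -> (forall p q, P p -> P q -> P (p * q)) ->
  forall p, P p.
Proof.
move=> PC PX PD PM p; rewrite (mpolyE p).
have P0 : P 0 by have := PC 0; rewrite /polC mpolyC0.
have P1 : P 1 by have := PC 1; rewrite /polC mpolyC1.
apply: big_ind => // m _; rewrite -mul_mpolyC; apply: (PM); first exact: PC.
rewrite mpolyXE_id; apply: (big_ind P) => // i _.
elim: (m i) => [|e IH]; first by rewrite expr0.
by rewrite exprS; apply: PM => //; apply: PX.
Qed.

Section GradedModules.
Variables (R : realType) (n : nat).
Implicit Types (M N P : gmod R n).

Lemma gcomp0 M k : gcomp k (0 : M) = 0.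
Proof. by apply: (addrI (gcomp k (0 : M))); rewrite -gcomp_add !addr0. Qed.

Lemma gcompB M k (u v : M) : gcomp k (u - v) = gcomp k u - gcomp k v.
Proof. by apply: (addIr (gcomp k v)); rewrite -gcomp_add !subrK. Qed.

Lemma gcomp_sum M k (I : Type) (s : seq I) (F : I -> M) :
  gcomp k (\sum_(i <- s) F i) = \sum_(i <- s) gcomp k (F i).
Proof.
elim: s => [|i s IH]; first by rewrite !big_nil gcomp0.
by rewrite !big_cons gcomp_add IH.
Qed.

Lemma gcompK M k (v : M) : gcomp k (gcomp k v) = gcomp k v.
Proof. by rewrite gcomp_proj eqxx. Qed.

Lemma gcomp_out M (v : M) (s : seq int) j :
  v = \sum_(k <- s) gcomp k v -> j \notin s -> gcomp j v = 0.
Proof.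
move=> vE js; rewrite vE gcomp_sum big_seq big1 // => k ks.
by rewrite gcomp_proj; case: eqP => // ejk; move: js; rewrite ejk ks.
Qed.

Lemma gdecomp_widen M (v : M) (s1 s2 : seq int) :
  uniq s1 -> uniq s2 -> {subset s1 <= s2} ->
  v = \sum_(k <- s1) gcomp k v -> v = \sum_(k <- s2) gcomp k v.
Proof.
move=> u1 u2 s12 vE; rewrite [LHS]vE; apply: eq_big_support => // k ks.
  exact: gcomp_out vE ks.
by apply: gcomp_out vE _; apply: contra ks; apply: s12.
Qed.

Lemma gmorph_plinear M N (f : M -> N) : is_gmorph f -> plinear f.
Proof. by case. Qed.

Lemma gmorph_id M : is_gmorph (fun v : M => v).
Proof. by []. Qed.

Lemma gmorph_comp M N P (f : M -> N) (h : N -> P) :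
  is_gmorph f -> is_gmorph h -> is_gmorph (fun v => h (f v)).
Proof.
move=> [f_lin fG] [h_lin hG]; split; first exact: plinear_comp.
by move=> k v /=; rewrite fG hG.
Qed.

Lemma gmorphD M N (f h : M -> N) :
  is_gmorph f -> is_gmorph h -> is_gmorph (fun v => f v + h v).
Proof.
move=> [f_lin fG] [h_lin hG]; split=> [p u v|k v].
  by rewrite f_lin h_lin scalerDr addrACA.
by rewrite fG hG gcomp_add.
Qed.

Lemma gmorphB M N (f h : M -> N) :
  is_gmorph f -> is_gmorph h -> is_gmorph (fun v => f v - h v).
Proof.
move=> [f_lin fG] [h_lin hG]; split=> [p u v|k v].
  by rewrite f_lin h_lin scalerBr opprD addrACA.
by rewrite fG hG gcompB.
Qed.

Definition gsupp M (v : M) : seq int := projT1 (cid (gcomp_fin v)).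

Lemma gsupp_uniq M (v : M) : uniq (gsupp v).
Proof. by case: (projT2 (cid (gcomp_fin v))). Qed.

Lemma gsuppE M (v : M) : v = \sum_(k <- gsupp v) gcomp k v.
Proof. by case: (projT2 (cid (gcomp_fin v))). Qed.

(* The degree-0 component of h for the grading of Hom(M, N). *)
Definition gpart M N (h : M -> N) (v : M) : N :=
  \sum_(k <- gsupp v) gcomp k (h (gcomp k v)).

Section DegreeZeroPart.
Variables (M N : gmod R n) (h : M -> N).
Hypothesis h_lin : plinear h.

Lemma gpartE (v : M) (s : seq int) : uniq s -> v = \sum_(k <- s) gcomp k v ->
  gpart h v = \sum_(k <- s) gcomp k (h (gcomp k v)).
Proof.
move=> us vE; apply: eq_big_support; rewrite ?gsupp_uniq // => k ks.
  by rewrite (gcomp_out (gsuppE v) ks) (plinear0 h_lin) gcomp0.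
by rewrite (gcomp_out vE ks) (plinear0 h_lin) gcomp0.
Qed.

Lemma gpartD (u v : M) : gpart h (u + v) = gpart h u + gpart h v.
Proof.
pose s := undup (gsupp u ++ gsupp v ++ gsupp (u + v)).
have us : uniq s by apply: undup_uniq.
have widen w : {subset gsupp w <= s} -> w = \sum_(k <- s) gcomp k w.
  by move=> ws; apply: gdecomp_widen (gsuppE w); rewrite ?gsupp_uniq.
rewrite !(gpartE us) -?big_split /=; first last.
- by apply: widen => k kv; rewrite /s mem_undup !mem_cat kv !orbT.
- by apply: widen => k kv; rewrite /s mem_undup !mem_cat kv.
- by apply: widen => k kv; rewrite /s mem_undup !mem_cat kv orbT.
by apply: eq_bigr => k _; rewrite gcomp_add (plinearD h_lin) gcomp_add.
Qed.

Lemma gpartZ_shift (q : Pol R n) (e : int) :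
  (forall k (v : M), gcomp k (q *: v) = q *: gcomp (k - e) v) ->
  (forall k (v : N), gcomp k (q *: v) = q *: gcomp (k - e) v) ->
  forall v, gpart h (q *: v) = q *: gpart h v.
Proof.
move=> qM qN v; rewrite (gpartE (s := map (+%R^~ e) (gsupp v))).
- rewrite big_map /gpart scaler_sumr; apply: eq_bigr => k _.
  by rewrite qM addrK (plinearZ h_lin) qN addrK.
- by rewrite map_inj_uniq ?gsupp_uniq //; apply: addIr.
- rewrite big_map [v in LHS]gsuppE scaler_sumr; apply: eq_bigr => k _.
  by rewrite qM addrK.
Qed.

Lemma gpartZ p (v : M) : gpart h (p *: v) = p *: gpart h v.
Proof.
elim/mpoly_ring_ind: p v => [c|i|p q IHp IHq|p q IHp IHq] v.
- by apply: (gpartZ_shift (e := 0)) => k w; rewrite gcomp_const subr0.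
- by apply: (gpartZ_shift (e := 2)) => k w; rewrite gcomp_var.
- by rewrite !scalerDl gpartD IHp IHq.
- by rewrite -!scalerA IHp IHq.
Qed.

Lemma gpart_gcomp j (v : M) : gpart h (gcomp j v) = gcomp j (gpart h v).
Proof.
rewrite (gpartE (s := [:: j])) ?big_seq1 ?gcompK // gcomp_sum.
rewrite (eq_bigr _ (fun k _ => gcomp_proj _ _ _)) sum_pred1_uniq ?gsupp_uniq //.
case: ifP => // /negbT jv.
by rewrite (gcomp_out (gsuppE v) jv) (plinear0 h_lin) gcomp0.
Qed.

Lemma gpart_gmorph : is_gmorph (gpart h).
Proof. by split=> [p u v|k v]; rewrite ?gpartD ?gpartZ ?gpart_gcomp. Qed.

Lemma gpart_comp P (rho : N -> P) (D : M -> P) :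
  is_gmorph rho -> is_gmorph D -> (forall v, rho (h v) = D v) ->
  forall v, rho (gpart h v) = D v.
Proof.
move=> [rho_lin rhoG] [D_lin DG] rhoh v.
rewrite (plinear_sum rho_lin) [v in RHS]gsuppE (plinear_sum D_lin).
by apply: eq_bigr => k _; rewrite rhoG rhoh -DG gcompK.
Qed.

End DegreeZeroPart.

End GradedModules.

Lemma face_sub (R : realType) (n : nat) (xi t : set 'rV[R]_n) :
  is_face xi t -> xi `<=` t.
Proof. by case=> u [_ ->] x []. Qed.

Lemma face_proper (R : realType) (n : nat) (xi t : set 'rV[R]_n) :
  is_face xi t -> xi <> t -> xi `<` t.
Proof.
by move=> fxi nxi; rewrite properEneq; split; [apply/eqP | apply: face_sub].
Qed.

Unset Implicit Arguments.

Section Extension.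
Variables (R : realType) (n : nat) (S : set (set 'rV[R]_n)) (M N I : amod R n).
Variables (eta : forall t, amM M t -> amM N t) (g : forall t, amM M t -> amM I t).
Hypotheses (N_amod : is_amod S N) (I_amod : is_amod S I) (I_flabby : flabby S I).
Hypotheses (eta_sinj : strongly_injective S eta) (N_free : locally_free S N).
Hypothesis g_amap : is_amap S g.

Definition extends_on (T : set (set 'rV[R]_n)) (f : forall t, amM N t -> amM I t) :=
  is_amap T f /\ forall t, T t -> forall v, f t (eta t v) = g t v.

Definition face_closed (T : set (set 'rV[R]_n)) :=
  forall t xi, T t -> S xi -> is_face xi t -> T xi.

Lemma lift_boundary s (D : forall xi, amM N s -> amM I xi) : S s ->
  (forall xi, S xi -> is_face xi s -> xi <> s -> is_gmorph (D xi)) ->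
  (forall xi zeta, S xi -> S zeta -> is_face xi s -> xi <> s -> is_face zeta xi ->
     forall v, amres I xi zeta (D xi v) = D zeta v) ->
  exists2 H : amM N s -> amM I s, is_gmorph H &
    forall xi, S xi -> is_face xi s -> xi <> s -> forall v, amres I s xi (H v) = D xi v.
Proof.
move=> Ss DG Dcompat.
have [b [_ b_span b_free]] := N_free s Ss.
have [I_kill _ I_res _ _] := I_amod s Ss.
have [w wE] := choice (fun k : 'I_(size b) =>
  I_flabby s Ss (fun xi => D xi b`_k) (fun xi zeta Sxi Sz fxi nxi fz =>
    Dcompat xi zeta Sxi Sz fxi nxi fz b`_k)).
have [h h_lin hb] := free_lift w b_span b_free I_kill.
exists (gpart h); first exact: gpart_gmorph.
move=> xi Sxi fxi nxi; apply: gpart_comp => //; [exact: I_res | exact: DG |].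
apply: (plinear_span_eq b_span).
- by apply: (plinear_comp h_lin); apply: gmorph_plinear; apply: I_res.
- exact: gmorph_plinear (DG _ Sxi fxi nxi).
- by move=> k; rewrite /= hb wE.
Qed.

Lemma local_extension T s f :
  T `<=` S -> face_closed T -> T s -> extends_on (T `\ s) f ->
  exists fs : amM N s -> amM I s,
    [/\ is_gmorph fs, forall u, fs (eta s u) = g s u &
      forall xi, S xi -> is_face xi s -> xi <> s ->
        forall v, f xi (amres N s xi v) = amres I s xi (fs v)].
Proof.
move=> TS Tc Ts [[fG fC] fE]; have Ss := TS s Ts.
have bdT xi : S xi -> is_face xi s -> xi <> s -> (T `\ s) xi.
  by move=> Sxi fxi nxi; split=> //; apply: Tc Ts Sxi fxi.
have [[etaG etaC] /(_ s Ss) [_ [r [rG rK]]]] := eta_sinj.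
have [gG gC] := g_amap.
have [_ _ N_res _ N_resC] := N_amod s Ss.
have [_ _ I_res _ I_resC] := I_amod s Ss.
pose D xi v := f xi (amres N s xi v) - amres I s xi (g s (r v)).
have DG xi : S xi -> is_face xi s -> xi <> s -> is_gmorph (D xi).
  move=> Sxi fxi nxi; apply: gmorphB.
    exact: gmorph_comp (N_res _ Sxi fxi) (fG _ (bdT _ Sxi fxi nxi)).
  exact: gmorph_comp (gmorph_comp rG (gG _ Ss)) (I_res _ Sxi fxi).
have D_eta xi : S xi -> is_face xi s -> xi <> s -> forall u, D xi (eta s u) = 0.
  move=> Sxi fxi nxi u; rewrite /D rK -etaC // fE; last exact: bdT.
  by rewrite -gC // subrr.
have Dcompat xi zeta : S xi -> S zeta -> is_face xi s -> xi <> s -> is_face zeta xi ->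
    forall v, amres I xi zeta (D xi v) = D zeta v.
  move=> Sxi Sz fxi nxi fz v.
  have Tz : (T `\ s) zeta.
    split; first exact: Tc (Tc _ _ Ts Sxi fxi) Sz fz.
    move=> /= zs; apply: nxi; apply/seteqP; split; first exact: face_sub.
    by rewrite -zs; apply: face_sub.
  have [_ _ I_resxi _ _] := I_amod xi Sxi.
  rewrite /D (plinearB (gmorph_plinear (I_resxi _ Sz fz))) -fC //; last exact: bdT.
  by rewrite N_resC // I_resC.
have [H HG Hres] := lift_boundary s D Ss DG Dcompat.
(* As D kills eta_s(M(s)), composing H with 1 - eta_s o r keeps its boundary
   values while killing eta_s(M(s)) itself. *)
exists (fun v => g s (r v) + H (v - eta s (r v))); split.
- apply: gmorphD; first exact: gmorph_comp rG (gG _ Ss).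
  exact: gmorph_comp (gmorphB (gmorph_id _) (gmorph_comp rG (etaG _ Ss))) HG.
- by move=> u; rewrite rK subrr (plinear0 (gmorph_plinear HG)) addr0.
- move=> xi Sxi fxi nxi v.
  rewrite (plinearD (gmorph_plinear (I_res _ Sxi fxi))) Hres //.
  rewrite (plinearB (gmorph_plinear (DG _ Sxi fxi nxi))) D_eta // subr0.
  by rewrite addrC subrK.
Qed.

Lemma extend_at_maximal T s f :
  T `<=` S -> face_closed T -> T s -> (forall t, T t -> ~ s `<` t) ->
  extends_on (T `\ s) f -> exists f', extends_on T f'.
Proof.
move=> TS Tc Ts smax fext.
have [fs [fsG fsE fsC]] := local_extension T s f TS Tc Ts fext.
case: fext => [[fG fC] fE].
have [_ _ _ N_resxx _] := N_amod s (TS s Ts).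
have [_ _ _ I_resxx _] := I_amod s (TS s Ts).
have off t : T t -> s != t -> (T `\ s) t.
  by move=> Tt /eqP nst; split=> // /esym.
exists (@dfwith _ (fun t => amM N t -> amM I t) f s fs); split; first split.
- move=> t Tt; have [<-|nst] := eqVneq s t; first by rewrite dfwith_in.
  by rewrite dfwith_out //; apply: fG; apply: off.
- move=> t xi Tt Txi fxi.
  have [est|nst] := eqVneq s t; have [esxi|nsxi] := eqVneq s xi; subst => v.
  + by rewrite dfwith_in N_resxx I_resxx.
  + rewrite dfwith_in dfwith_out //; apply: fsC => //; first exact: TS.
    by move=> xis; rewrite xis eqxx in nsxi.
  + by case: (smax t Tt); apply: face_proper => // st; rewrite st eqxx in nst.
  + rewrite !dfwith_out //; apply: fC => //; first exact: off t Tt nst.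
    exact: off xi Txi nsxi.
- move=> t Tt; have [<-|nst] := eqVneq s t => v; first by rewrite dfwith_in.
  by rewrite dfwith_out // fE //; apply: off.
Qed.

Lemma extends_on_face_closed (l : seq (set 'rV[R]_n)) :
  (forall t, S t -> t \in l) ->
  forall T, T `<=` S -> face_closed T -> exists f, extends_on T f.
Proof.
move=> Sl.
suff ind k : forall T, (count (fun t => `[< T t >]) l < k)%N ->
    T `<=` S -> face_closed T -> exists f, extends_on T f.
  by move=> T; apply: ind (ltnSn _).
elim: k => // k IH T cnt TS Tc.
have [neT|emptyT] := pselect (T !=set0); last first.
  by exists (fun _ _ => 0); split; [split|] => t *; case: emptyT; exists t.
have [s Ts smax] := ex_maximal_set (fun t Tt => Sl t (TS t Tt)) neT.
have [|||f fext] := IH (T `\ s).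
- rewrite -ltnS; apply: leq_trans cnt; apply: (count_lt_subpred (x := s)).
  + by move=> t /asboolP [Tt _]; apply/asboolP.
  + exact: Sl (TS s Ts).
  + by apply/asboolP.
  + by apply/negP => /asboolP [_ /=].
- by move=> t [/TS].
- move=> t xi [Tt nts] Sxi fxi; split; first exact: Tc t xi Tt Sxi fxi.
  move=> /= xis; apply: (smax t Tt); rewrite -xis; apply: face_proper => // xit.
  by apply: nts; rewrite -xit; exact: xis.
exact: extend_at_maximal T s f TS Tc Ts smax fext.
Qed.

End Extension.

Theorem proposition6p5 (R : realType) (n : nat) (S : set (set 'rV[R]_n))
    (M N I : amod R n) (eta : forall t, amM M t -> amM N t) :
  is_finite_fan S -> is_amod S M -> is_amod S N -> is_amod S I ->
  flabby S I -> strongly_injective S eta -> locally_free S N ->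
  forall g : forall t, amM M t -> amM I t, is_amap S g ->
  exists f : forall t, amM N t -> amM I t,
    is_amap S f /\ (forall t, S t -> forall v, f t (eta t v) = g t v).
Proof.
move=> [S_fin _ _ _] _ N_amod I_amod I_flabby eta_sinj N_free g g_amap.
have [l Sl] := iffLR (finite_seqP S) S_fin.
apply: (extends_on_face_closed R n S M N I eta g N_amod I_amod I_flabby eta_sinj
  N_free g_amap l) => // t; by rewrite Sl.
Qed.
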